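(* If $w\ge 3$, then $m_3^{(1)}(3,w)$ equals the Griesmer upper bound, i.e. the largest integer $n$ with $n\ge g_3^{(2)}(4,n-w)$. Moreover, $m_3^{(1)}(3,2)=10$.
   Context: For a prime power $q$ and $N\ge1$, a multiset of points in $\mathrm{PG}(N,q)$ is a map $\mathcal{K}$ from the points to $\mathbb{Z}_{\ge0}$, with $\mathcal{K}(S)=\sum_{P\in S}\mathcal{K}(P)$; its cardinality is $\mathcal{K}(\mathrm{PG}(N,q))$. Dimensions are projective (lines have dimension 1). For $0\le r\le N-1$ and a positive integer $w$, $m_q^{(r)}(N,w)$ is the maximum cardinality of a multiset of points in $\mathrm{PG}(N,q)$ such that every $r$-dimensional subspace has multiplicity at most $w$. Let $v_j=(q^j-1)/(q-1)$ and, for $1\le s\le k$, $g_q^{(s)}(k,d)=d+\sum_{i=1}^{k-s}\lceil d/(q^iv_s)\rceil$. The Griesmer upper bound for $m_q^{(r)}(N,w)$ is the largest integer $n$ with $n\ge g_q^{(N-r)}(N+1,n-w)$. *)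

From mathcomp Require Import all_boot all_order all_algebra all_field.
Set Implicit Arguments. Unset Strict Implicit. Unset Printing Implicit Defensive.

Section PG.
Variable F : finFieldType.
Variable N : nat.

(* Vectors of F^(N+1); PG(N,q) with q = #|F| is the set of its subspaces. *)
Definition vec := 'rV[F]_(N.+1).

(* S is a (vector-)subspace of F^(N+1) of vector dimension d,
   i.e. a projective subspace of projective dimension d-1. *)
Definition is_subspace (d : nat) (S : {set vec}) : bool :=
  [exists A : 'M[F]_(d, N.+1), (\rank A == d) && (S == [set v : vec | (v <= A)%MS])].

Definition is_point (S : {set vec}) : bool := is_subspace 1 S.
Definition is_proj_subspace (r : nat) (S : {set vec}) : bool := is_subspace r.+1 S.

(* A multiset of points: a map from points to nat (values off points are ignored). *)
Definition mult_of (K : {set vec} -> nat) (S : {set vec}) : nat :=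
  \sum_(P : {set vec} | is_point P && (P \subset S)) K P.

Definition card_ms (K : {set vec} -> nat) : nat :=
  \sum_(P : {set vec} | is_point P) K P.

Definition admissible (r w : nat) (K : {set vec} -> nat) : Prop :=
  forall S : {set vec}, is_proj_subspace r S -> mult_of K S <= w.

Definition is_m (r w m : nat) : Prop :=
  (exists K, admissible r w K /\ card_ms K = m) /\
  (forall K, admissible r w K -> card_ms K <= m).

End PG.

Definition ceil_div (a b : nat) : nat := (a + b.-1) %/ b.

Definition vq (q j : nat) : nat := (q ^ j - 1) %/ (q - 1).

Definition griesmer_g (q s k d : nat) : nat :=
  d + \sum_(1 <= i < (k - s).+1) ceil_div d (q ^ i * vq q s).

Definition griesmer_ub (q N r w n : nat) : Prop :=
  griesmer_g q (N - r) N.+1 (n - w) <= n /\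
  (forall n', griesmer_g q (N - r) N.+1 (n' - w) <= n' -> n' <= n).
Arguments is_m F N r w m : clear implicits.

From mathcomp Require Import all_boot all_order all_algebra all_field.
From mathcomp Require Import zify ring.
Set Implicit Arguments. Unset Strict Implicit. Unset Printing Implicit Defensive.
Import GRing.Theory.

(* Let K be a multiset of points of PG(3,3) with at most w points on every line,
   and let s be the largest multiplicity of a point p.  The 13 lines through p
   cover PG(3,3) and each carries at most min(w, 4 s), whence |K| + 12 s <= 13 min(w, 4 s)
   and |K| <= 13 w - 12 ceil(w/4), the Griesmer bound.  For w >= 3 it is attained
   by a copies of every point, b more copies of the points off a plane and c more
   copies of a single point, where 40 a + 27 b + c is the bound and 4 a + 3 b + c <= w.
   For w = 2, s = 2 forces |K| <= 2, so K is a cap.  A plane cap has at most 4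
   points (a parity argument), and the 4 planes through a secant line then give
   |K| <= 2 + 4 * 2 = 10, attained by the elliptic quadric x0^2 + x1^2 + x2 x3 = 0.
   All counting is done on nonzero vectors, q - 1 of which represent each point. *)

Section NatSums.
Variable I : finType.
Implicit Types (P : pred I) (f : I -> nat).

Lemma leq_sum_const P f c : (forall i, P i -> f i <= c) -> \sum_(i | P i) f i <= #|P| * c.
Proof. by move=> le_fc; rewrite -sum_nat_const; exact: leq_sum. Qed.

Lemma exists_gt_sum_const P f c : #|P| * c < \sum_(i | P i) f i -> exists2 i, P i & c < f i.
Proof.
move=> lt_sum; apply/exists_inP; apply: contraLR lt_sum.
rewrite negb_exists_in -leqNgt => /forall_inP le_fc.
by apply: leq_sum_const => i /le_fc; rewrite -leqNgt.
Qed.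

Lemma exists_lt_sum_const P f c : \sum_(i | P i) f i < #|P| * c -> exists2 i, P i & f i < c.
Proof.
move=> lt_sum; apply/exists_inP; apply: contraLR lt_sum.
rewrite negb_exists_in -leqNgt => /forall_inP le_cf.
by rewrite -sum_nat_const; apply: leq_sum => i /le_cf; rewrite -leqNgt.
Qed.

Lemma sum_eq_const_bound P f c : (forall i, P i -> f i <= c) ->
  \sum_(i | P i) f i = #|P| * c -> forall i, P i -> f i = c.
Proof.
move=> le_fc sum_c i Pi; apply/eqP; rewrite eqn_leq le_fc //= leqNgt; apply/negP => lt_fc.
have le_rest : \sum_(j | P j && (j != i)) f j <= #|[predD1 P & i]| * c.
  rewrite (eq_card (B := [pred j | P j && (j != i)])); last by move=> j; rewrite !inE andbC.
  by apply: leq_sum_const => j /andP[/le_fc].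
have iP : i \in P by [].
move: sum_c; rewrite (bigD1 i) //= (cardD1 i) iP; nia.
Qed.

Lemma sum_indicator P (Q : pred I) : \sum_(i | P i) (Q i : nat) = #|[pred i | P i && Q i]|.
Proof. by rewrite -sum1_card big_mkcondr /=; apply: eq_bigr => i _; case: (Q i). Qed.

End NatSums.

(** * Counting in PG(n, q) *)

Section ProjectiveSpace.
Variables (F : finFieldType) (n : nat).
Local Notation V := 'rV[F]_n.+1.
Local Notation q := #|F|.

Lemma pred_card_field_gt0 : 0 < q.-1.
Proof. by have := card_finNzRing_gt1 F; case: q => [|[]]. Qed.

Definition spanset m (A : 'M[F]_(m, n.+1)) : {set V} := [set v : V | (v <= A)%MS].

Lemma in_spanset m (A : 'M_(m, n.+1)) v : (v \in spanset A) = (v <= A)%MS.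
Proof. by rewrite inE. Qed.

Lemma card_spanset m (A : 'M_(m, n.+1)) : #|spanset A| = q ^ \rank A.
Proof.
have -> : spanset A = [set (u *m row_base A)%R | u in 'rV_(\rank A)].
  apply/setP => v; rewrite in_spanset -(eq_row_base A).
  by apply/submxP/imsetP => [[u ->]|[u _ ->]]; exists u.
rewrite card_imset ?card_mx ?mul1n //.
have [B baseB1] := row_freeP (row_base_free A); apply: can_inj (mulmx^~ B) _ => u /=.
by rewrite -mulmxA baseB1 mulmx1.
Qed.

Lemma sub_spanset m (A : 'M_(m, n.+1)) (x : V) : (spanset x \subset spanset A) = (x <= A)%MS.
Proof.
apply/subsetP/idP => [sub_xA | xA y]; last by rewrite !in_spanset => /submx_trans; apply.
by have := sub_xA x; rewrite !in_spanset submx_refl; apply.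
Qed.

Lemma spansetS m m' (A : 'M_(m, n.+1)) (B : 'M_(m', n.+1)) :
  (A <= B)%MS -> spanset A \subset spanset B.
Proof. by move=> sAB; apply/subsetP => y; rewrite !in_spanset => /submx_trans; apply. Qed.

Lemma eqmx_spanset m m' (A : 'M_(m, n.+1)) (B : 'M_(m', n.+1)) :
  (A :=: B)%MS -> spanset A = spanset B.
Proof. by move=> eqAB; apply/setP => v; rewrite !in_spanset eqAB. Qed.

Lemma is_point_spanset (x : V) : x != 0%R -> is_point (spanset x).
Proof. by move=> x0; apply/existsP; exists x; rewrite rank_rV x0 /=; apply/eqP. Qed.

Lemma is_pointP (P : {set V}) : is_point P -> exists2 p : V, p != 0%R & P = spanset p.
Proof.
case/existsP => A /andP[rA /eqP->]; exists A => //.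
by rewrite -mxrank_eq0 (eqP rA).
Qed.

Lemma is_line_spanset (A : 'M_(2, n.+1)) : \rank A = 2 -> is_proj_subspace 1 (spanset A).
Proof. by move=> rA; apply/existsP; exists A; rewrite rA eqxx /=; apply/eqP. Qed.

Lemma is_lineP (S : {set V}) :
  is_proj_subspace 1 S -> exists2 A : 'M_(2, n.+1), \rank A = 2 & S = spanset A.
Proof. by case/existsP => A /andP[/eqP rA /eqP ->]; exists A. Qed.

Lemma fiber_spanset (p : V) : p != 0%R ->
  [set y : V | (y != 0%R) && (spanset y == spanset p)] = [set (a *: p)%R | a in predC1 0%R].
Proof.
move=> p0; apply/setP => y; rewrite inE; apply/idP/imsetP => [|[a a0 ->]].
  case/andP=> y0 /eqP eq_yp; have : (y <= p)%MS by rewrite -sub_spanset eq_yp sub_spanset.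
  case/sub_rVP=> a def_y; exists a => //; rewrite inE.
  by apply: contraNneq y0 => a0; rewrite def_y a0 scale0r.
rewrite inE /= in a0.
by rewrite scaler_eq0 negb_or a0 p0 (eqmx_spanset (eqmx_scale _ a0)) eqxx.
Qed.

Lemma card_fiber_spanset (p : V) : p != 0%R ->
  #|[set y : V | (y != 0%R) && (spanset y == spanset p)]| = q.-1.
Proof.
move=> p0; rewrite fiber_spanset // card_imset ?cardC1 // => a b /eqP.
by rewrite -subr_eq0 -scalerBl scaler_eq0 (negPf p0) orbF subr_eq0 => /eqP.
Qed.

Lemma sum_fiber_spanset (g : V -> nat) (p : V) : p != 0%R ->
  (forall y, y != 0%R -> spanset y = spanset p -> g y = g p) ->
  \sum_(y | (y != 0%R) && (spanset y == spanset p)) g y = q.-1 * g p.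
Proof.
move=> p0 g_fiber; rewrite (eq_bigr (fun=> g p)) => [|y /andP[y0 /eqP]]; last exact: g_fiber.
by rewrite sum_nat_cond_const card_fiber_spanset.
Qed.

Lemma partition_sum_nz m (A : 'M_(m, n.+1)) (g : V -> nat) :
  \sum_(y : V | (y <= A)%MS && (y != 0%R)) g y =
  \sum_(P | is_point P && (P \subset spanset A)) \sum_(y | (y != 0%R) && (spanset y == P)) g y.
Proof.
rewrite (partition_big (@spanset 1) (fun P => is_point P && (P \subset spanset A))).
  apply: eq_bigr => P /andP[_ sPA]; apply: eq_bigl => y.
  case: (boolP (spanset y == P)) => [/eqP eyP|_]; rewrite ?andbT ?andbF //.
  by rewrite -sub_spanset eyP sPA.
by move=> y /andP[yA y0]; rewrite is_point_spanset // sub_spanset.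
Qed.

Lemma sum_nz_spanset m (A : 'M_(m, n.+1)) (K : {set V} -> nat) :
  \sum_(y : V | (y <= A)%MS && (y != 0%R)) K (spanset y) = q.-1 * mult_of K (spanset A).
Proof.
rewrite partition_sum_nz /mult_of big_distrr; apply: eq_bigr => P /andP[/is_pointP[p p0 ->] _].
by rewrite sum_fiber_spanset // => y _ ->.
Qed.

Lemma dvdn_sum_nz m (A : 'M_(m, n.+1)) (g : V -> nat) d :
  (forall y, d %| g y) -> (forall y z, z != 0%R -> spanset y = spanset z -> g y = g z) ->
  q.-1 * d %| \sum_(y : V | (y <= A)%MS && (y != 0%R)) g y.
Proof.
move=> dvd_d g_fiber; rewrite partition_sum_nz; apply: dvdn_sum => P /andP[/is_pointP[p p0 ->] _].
by rewrite sum_fiber_spanset ?dvdn_mul // => y _; apply: g_fiber.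
Qed.

Lemma rV_sub_sym (x y : V) : x != 0%R -> (x <= y)%MS -> (y <= x)%MS.
Proof.
move=> x0 xy; have y0 : y != 0%R.
  by apply: contraNneq x0 => y0; move: xy; rewrite y0 => /submx0null->.
by have [_ <-] := mxrank_leqif_sup xy; rewrite !rank_rV x0 y0.
Qed.

Lemma spanset_rV_eq (x y : V) : x != 0%R -> (x <= y)%MS -> spanset x = spanset y.
Proof. by move=> x0 xy; apply/eqmx_spanset/eqmxP; rewrite xy rV_sub_sym. Qed.

Lemma mult_of_point (K : {set V} -> nat) (p : V) :
  p != 0%R -> mult_of K (spanset p) = K (spanset p).
Proof.
move=> p0; apply: big_pred1 => P /=; apply/andP/eqP => [[/is_pointP[x x0 ->]] | ->].
  by rewrite sub_spanset; apply: spanset_rV_eq.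
by rewrite is_point_spanset.
Qed.

Lemma card_ms_mult_of (K : {set V} -> nat) : card_ms K = mult_of K (spanset (1%:M : 'M_n.+1)).
Proof.
apply: eq_bigl => P; suff -> : spanset (1%:M : 'M_n.+1) = setT by rewrite subsetT andbT.
by apply/setP => v; rewrite in_spanset submx1 inE.
Qed.

Lemma card_notin_submx m m' (B : 'M_(m, n.+1)) (D : 'M_(m', n.+1)) : (B <= D)%MS ->
  #|[pred y : V | (y <= D)%MS && ~~ (y <= B)%MS]| = q ^ \rank D - q ^ \rank B.
Proof.
move=> sBD; transitivity #|spanset D :\: spanset B|.
  by apply: eq_card => y; rewrite !inE andbC.
by rewrite cardsD (setIidPr (spansetS sBD)) !card_spanset.
Qed.

Lemma card_nz_submx m (A : 'M_(m, n.+1)) :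
  #|[pred y : V | (y <= A)%MS && (y != 0%R)]| = q ^ \rank A - 1.
Proof.
have := card_notin_submx (sub0mx 1 A); rewrite mxrank0 expn0 => <-.
apply: eq_card => y; rewrite !inE; congr (_ && _); apply/idP/idP; apply: contra.
  by move/submx0null->.
by move/eqP->; rewrite sub0mx.
Qed.

Lemma sub_col_mxl m1 m2 (A : 'M[F]_(m1, n.+1)) (B : 'M[F]_(m2, n.+1)) : (A <= col_mx A B)%MS.
Proof. by rewrite -addsmxE addsmxSl. Qed.

Lemma sub_col_mxr m1 m2 (A : 'M[F]_(m1, n.+1)) (B : 'M[F]_(m2, n.+1)) : (B <= col_mx A B)%MS.
Proof. by rewrite -addsmxE addsmxSr. Qed.

Lemma rank_col_mx_notin m (B : 'M_(m, n.+1)) (y : V) :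
  ~~ (y <= B)%MS -> \rank (col_mx B y) = (\rank B).+1.
Proof.
move=> yB; have y0 : y != 0%R by apply: contraNneq yB => ->; exact: sub0mx.
have -> : \rank (col_mx B y) = \rank (B + y)%MS by apply/eqmx_rank/eqmxP/eqmx_sym/addsmxE.
have : \rank B < \rank (B + y)%MS.
  by rewrite (ltn_leqif (mxrank_leqif_sup (addsmxSl B y))) addsmx_sub submx_refl.
by case: (mxrank_adds_leqif B y); rewrite rank_rV y0 => le_rank _; lia.
Qed.

Lemma is_line_col_mx (p y : V) : p != 0%R -> ~~ (y <= p)%MS ->
  is_proj_subspace 1 (spanset (col_mx p y)).
Proof. by move=> p0 yp; have := rank_col_mx_notin yp; rewrite rank_rV p0 => /is_line_spanset. Qed.

Lemma col_mx_exchange m (B : 'M_(m, n.+1)) (x y : V) : ~~ (x <= B)%MS -> ~~ (y <= B)%MS ->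
  (x <= col_mx B y)%MS -> (y <= col_mx B x)%MS.
Proof.
move=> xB yB x_By; have sBx_By : (col_mx B x <= col_mx B y)%MS.
  by rewrite col_mx_sub sub_col_mxl.
have [_] := mxrank_leqif_sup sBx_By; rewrite !rank_col_mx_notin // eqxx => /esym sBy_Bx.
exact: submx_trans (sub_col_mxr B y) sBy_Bx.
Qed.

Lemma spanset_col_mx_eq m (B : 'M_(m, n.+1)) (y z : V) :
  spanset y = spanset z -> spanset (col_mx B y) = spanset (col_mx B z).
Proof.
move=> eq_yz; have /eqmxP eqmx_yz : (y == z)%MS by rewrite -!sub_spanset eq_yz subxx.
by apply/setP => v; rewrite !in_spanset -!addsmxE (adds_eqmx (eqmx_refl B) eqmx_yz).
Qed.

Lemma exists_nz_capmx m1 m2 (A : 'M[F]_(m1, n.+1)) (C : 'M[F]_(m2, n.+1)) :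
  n.+1 < \rank A + \rank C -> exists2 v : V, v != 0%R & (v <= A)%MS && (v <= C)%MS.
Proof.
move=> rank_gt; exists (nz_row (A :&: C)%MS); last by rewrite -sub_capmx nz_row_sub.
rewrite nz_row_eq0 -mxrank_eq0; have := mxrank_sum_cap A C.
have := rank_leq_col (A + C)%MS; lia.
Qed.

Lemma exists_nz_coord_eq0 m (A : 'M_(m, n.+1)) (j : 'I_n.+1) : 1 < \rank A ->
  exists2 v : V, v != 0%R & (v <= A)%MS && (v ord0 j == 0%R).
Proof.
pose H := kermx (delta_mx j ord0 : 'cV[F]_n.+1).
have rH : \rank H = n by rewrite mxrank_ker mxrank_delta subn1.
move=> rA_gt1; have [|v v0 /andP[vA vH]] := @exists_nz_capmx _ _ A H; first by rewrite rH; lia.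
exists v; rewrite // vA /=; move: vH; rewrite sub_kermx -colE => /eqP/matrixP/(_ ord0 ord0).
by rewrite !mxE => ->.
Qed.

Lemma sum_notin_spanset m m' (B : 'M_(m, n.+1)) (D : 'M_(m', n.+1)) (K : {set V} -> nat) :
  (B <= D)%MS ->
  \sum_(x : V | (x <= D)%MS && ~~ (x <= B)%MS) K (spanset x) =
  q.-1 * (mult_of K (spanset D) - mult_of K (spanset B)).
Proof.
move=> sBD; rewrite mulnBr -!sum_nz_spanset [in RHS](bigID (fun x : V => (x <= B)%MS)) /=.
have -> : \sum_(x : V | (x <= D)%MS && (x != 0%R) && (x <= B)%MS) K (spanset x) =
          \sum_(x : V | (x <= B)%MS && (x != 0%R)) K (spanset x).
  by apply: eq_bigl => x; case xB: (x <= B)%MS; rewrite ?andbF ?andbT //= (submx_trans xB sBD).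
rewrite addKn; apply: eq_bigl => x; rewrite -andbA; case: (x <= D)%MS => //=.
case xB: (x <= B)%MS; rewrite ?andbF ?andbT //=.
by symmetry; apply: contraFneq xB => ->; exact: sub0mx.
Qed.

(* A nonzero x of B lies in the join of B and y for every y in D \ B, whereas an x of
   D \ B lies in it exactly when y lies in the join of B and x (exchange). *)
Lemma sum_join_nz m m' (B : 'M_(m, n.+1)) (D : 'M_(m', n.+1)) (k : V -> nat) : (B <= D)%MS ->
  \sum_(y : V | (y <= D)%MS && ~~ (y <= B)%MS)
    \sum_(x : V | (x <= col_mx B y)%MS && (x != 0%R)) k x =
  (q ^ \rank D - q ^ \rank B) * \sum_(x : V | (x <= B)%MS && (x != 0%R)) k x +
  (q ^ (\rank B).+1 - q ^ \rank B) * \sum_(x : V | (x <= D)%MS && ~~ (x <= B)%MS) k x.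
Proof.
move=> sBD.
rewrite (exchange_big_dep (fun x : V => (x <= D)%MS && (x != 0%R))) /=; last first.
  move=> y x /andP[yD _] /andP[x_By ->]; rewrite andbT.
  by apply: submx_trans x_By _; rewrite col_mx_sub sBD yD.
rewrite (bigID (fun x : V => (x <= B)%MS)) /= !big_distrr /=; congr (_ + _).
- apply: eq_big => [x | x /andP[/andP[_ x0] xB]].
    by case xB: (x <= B)%MS; rewrite ?andbF ?andbT //= (submx_trans xB sBD).
  rewrite sum_nat_const -(card_notin_submx sBD); congr (_ * _).
  apply: eq_card => y; rewrite unfold_in /= !inE x0 andbT.
  by case: ((y <= D)%MS && ~~ (y <= B)%MS) => //=; apply: submx_trans xB (sub_col_mxl B y).
- apply: eq_big => [x | x /andP[/andP[xD x0] xB]].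
    case xB: (x <= B)%MS; rewrite ?andbF ?andbT //=.
    by case: (x <= D)%MS => //=; apply: contraFN xB => /eqP->; exact: sub0mx.
  rewrite sum_nat_const -(rank_col_mx_notin xB) -(card_notin_submx (sub_col_mxl B x)).
  congr (_ * _).
  apply: eq_card => y; rewrite unfold_in /= !inE x0 andbT; apply/idP/idP.
    by case/andP=> /andP[_ yB] x_By; rewrite yB andbT col_mx_exchange.
  case/andP=> y_Bx yB; rewrite yB andbT col_mx_exchange // andbT.
  by apply: submx_trans y_Bx _; rewrite col_mx_sub sBD xD.
Qed.

Lemma sum_mult_join m m' (B : 'M_(m, n.+1)) (D : 'M_(m', n.+1)) (K : {set V} -> nat) :
  (B <= D)%MS ->
  \sum_(y : V | (y <= D)%MS && ~~ (y <= B)%MS) mult_of K (spanset (col_mx B y)) =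
  (q ^ \rank D - q ^ \rank B) * mult_of K (spanset B) +
  (q ^ (\rank B).+1 - q ^ \rank B) * (mult_of K (spanset D) - mult_of K (spanset B)).
Proof.
move=> sBD; apply/eqP; rewrite -(eqn_pmul2l pred_card_field_gt0); apply/eqP.
rewrite big_distrr /= (eq_bigr _ (fun y _ => esym (sum_nz_spanset _ K))) sum_join_nz //.
by rewrite sum_nz_spanset sum_notin_spanset //; ring.
Qed.

Lemma sum_mult_lines_through (K : {set V} -> nat) m (D : 'M_(m, n.+1)) (p : V) :
  p != 0%R -> (p <= D)%MS ->
  \sum_(y : V | (y <= D)%MS && ~~ (y <= p)%MS) mult_of K (spanset (col_mx p y)) =
  (q ^ \rank D - q) * K (spanset p) + (q ^ 2 - q) * (mult_of K (spanset D) - K (spanset p)).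
Proof. by move=> p0 pD; rewrite sum_mult_join // rank_rV p0 mult_of_point // expn1. Qed.

Lemma card_notin_point m (D : 'M_(m, n.+1)) (p : V) : p != 0%R -> (p <= D)%MS ->
  #|[pred y : V | (y <= D)%MS && ~~ (y <= p)%MS]| = q ^ \rank D - q.
Proof. by move=> p0 pD; rewrite card_notin_submx // rank_rV p0 expn1. Qed.

Lemma mult_lines_through_point (K : {set V} -> nat) t (p : V) : p != 0%R ->
  (forall S, is_proj_subspace 1 S -> mult_of K S <= t) ->
  (q ^ n.+1 - q) * K (spanset p) + (q ^ 2 - q) * (card_ms K - K (spanset p)) <=
  (q ^ n.+1 - q) * t.
Proof.
move=> p0 le_line_t; have sp1 := submx1 p.
rewrite card_ms_mult_of; have := sum_mult_lines_through K p0 sp1; rewrite mxrank1 => <-.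
apply: leq_trans (leq_sum_const (c := t) _) _ => [y /andP[_ yp] | ].
  exact/le_line_t/is_line_col_mx.
by rewrite card_notin_point // mxrank1.
Qed.

Lemma mult_line_le (K : {set V} -> nat) s (S : {set V}) :
  (forall P, is_point P -> K P <= s) -> is_proj_subspace 1 S -> mult_of K S <= q.+1 * s.
Proof.
move=> le_point_s /is_lineP[A rA ->].
rewrite -(leq_pmul2l pred_card_field_gt0) -sum_nz_spanset.
apply: leq_trans (leq_sum_const (c := s) _) _ => [x /andP[_ x0] | ].
  exact/le_point_s/is_point_spanset.
by rewrite card_nz_submx rA -(exp1n 2) subn_sqr subn1 addn1 mulnA.
Qed.

Lemma exists_max_point (K : {set V} -> nat) :
  exists2 P0, is_point P0 & forall P, is_point P -> K P <= K P0.
Proof.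
have e0 : (delta_mx ord0 ord0 : V) != 0%R.
  by apply/eqP => /matrixP/(_ ord0 ord0)/eqP; rewrite !mxE !eqxx oner_eq0.
by case: (arg_maxnP K (is_point_spanset e0)) => P0; exists P0.
Qed.

Lemma npoints_spanset m (A : 'M_(m, n.+1)) :
  q.-1 * mult_of (fun=> 1) (spanset A) = q ^ \rank A - 1.
Proof. by rewrite -sum_nz_spanset -card_nz_submx sum1_card. Qed.

Lemma npoints_outside m m' (A : 'M_(m, n.+1)) (C : 'M_(m', n.+1)) :
  q.-1 * mult_of (fun P => ~~ (P \subset spanset C) : nat) (spanset A) =
  q ^ \rank A - q ^ \rank (A :&: C)%MS.
Proof.
rewrite -sum_nz_spanset -card_notin_submx ?capmxSl // sum_indicator.
apply: eq_card => y; rewrite !inE sub_spanset sub_capmx.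
case: (y <= A)%MS => //=; case yC: (y <= C)%MS; rewrite ?andbF ?andbT //.
by apply: contraFneq yC => ->; exact: sub0mx.
Qed.

Lemma mult_of_pred1 (P0 S : {set V}) :
  mult_of (fun P => P == P0 : nat) S = is_point P0 && (P0 \subset S).
Proof.
rewrite /mult_of; case: (boolP (is_point P0 && _)) => [P0S | notP0S].
  by rewrite (bigD1 P0) //= eqxx big1 // => P /andP[_ /negPf->].
by rewrite big1 // => P PS; apply/eqP; rewrite eqb0; apply: contraNneq notP0S => <-.
Qed.

End ProjectiveSpace.

(** * The Griesmer bound in PG(3, 3) *)

Local Notation V := 'rV['F_3]_4.

Lemma card_F3 : #|'F_3| = 3.
Proof. exact: card_Fp. Qed.

Definition griesmer_bound w := 13 * w - 12 * ((w + 3) %/ 4).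

Lemma griesmer_g_3_2_4 d : griesmer_g 3 (3 - 1) 3.+1 d = d + (d + 11) %/ 12 + (d + 35) %/ 36.
Proof. by rewrite /griesmer_g big_ltn // big_ltn // big_geq // /ceil_div /vq addn0 addnA. Qed.

Lemma griesmer_ub_bound w : 3 <= w -> griesmer_ub 3 3 1 w (griesmer_bound w).
Proof.
rewrite /griesmer_ub /griesmer_bound griesmer_g_3_2_4 => w_ge3; split=> [|n']; first lia.
by rewrite griesmer_g_3_2_4; lia.
Qed.

Lemma card_ms_le_griesmer_bound (K : {set V} -> nat) w :
  admissible 1 w K -> card_ms K <= griesmer_bound w.
Proof.
move=> adm; have [P0 /is_pointP[p p0 ->] maxK] := exists_max_point K.
have le_line S : is_proj_subspace 1 S -> mult_of K S <= minn w (4 * K (spanset p)).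
  by move=> lineS; rewrite leq_min adm //=; have := mult_line_le maxK lineS; rewrite card_F3.
have := mult_lines_through_point p0 le_line; rewrite card_F3 /griesmer_bound; lia.
Qed.

Definition mixed_multiset (a b c : nat) (H P0 P : {set V}) : nat :=
  a + b * ~~ (P \subset H) + c * (P == P0).

Lemma mult_of_mixed_multiset a b c H P0 S :
  mult_of (mixed_multiset a b c H P0) S = a * mult_of (fun=> 1) S +
    b * mult_of (fun P => ~~ (P \subset H) : nat) S + c * mult_of (fun P => P == P0 : nat) S.
Proof.
rewrite /mult_of !big_split /= !big_distrr /=; congr (_ + _ + _).
by apply: eq_bigr => P _; rewrite muln1.
Qed.

Lemma exists_mixed_multiset a b c : exists K : {set V} -> nat,
  card_ms K = 40 * a + 27 * b + c /\ admissible 1 (4 * a + 3 * b + c) K.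
Proof.
pose C : 'M['F_3]_(3, 4) := pid_mx 3; pose p0 : V := pid_mx 1.
have rC : \rank C = 3 by rewrite rank_pid_mx.
have nz_p0 : p0 != 0%R by rewrite -mxrank_eq0 rank_pid_mx.
exists (mixed_multiset a b c (spanset C) (spanset p0)); split.
  have pts : mult_of (fun=> 1) (spanset (1%:M : 'M['F_3]_4)) = 40.
    by have := npoints_spanset (1%:M : 'M['F_3]_4); rewrite mxrank1 card_F3; lia.
  have out : mult_of (fun P => ~~ (P \subset spanset C) : nat) (spanset (1%:M : 'M['F_3]_4)) = 27.
    have := npoints_outside (1%:M : 'M['F_3]_4) C.
    by have /capmx_idPr -> := submx1 C; rewrite mxrank1 rC card_F3; lia.
  rewrite card_ms_mult_of mult_of_mixed_multiset mult_of_pred1 is_point_spanset //.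
  by rewrite sub_spanset submx1 pts out; lia.
move=> _ /is_lineP[A rA ->]; rewrite mult_of_mixed_multiset.
have pts : mult_of (fun=> 1) (spanset A) = 4.
  by have := npoints_spanset A; rewrite rA card_F3; lia.
have out : mult_of (fun P => ~~ (P \subset spanset C) : nat) (spanset A) <= 3.
  have [v v0 /andP[vA vC]] : exists2 v : V, v != 0%R & (v <= A)%MS && (v <= C)%MS.
    by apply: exists_nz_capmx; rewrite rA rC.
  have /mxrankS : (v <= A :&: C)%MS by rewrite sub_capmx vA vC.
  rewrite rank_rV v0 => rank_cap; have : 3 <= 3 ^ \rank (A :&: C)%MS.
    by rewrite -[X in X <= _](expn1 3) leq_pexp2l.
  by have := npoints_outside A C; rewrite rA card_F3; lia.
rewrite pts mult_of_pred1 mulnC [3 * b]mulnC -[c in X in _ <= X]muln1.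
by rewrite !leq_add ?leq_mul2l ?leq_b1 ?out ?orbT.
Qed.

Lemma griesmer_bound_decomposition w : 3 <= w ->
  exists a b c, 40 * a + 27 * b + c = griesmer_bound w /\ 4 * a + 3 * b + c <= w.
Proof.
rewrite /griesmer_bound (divn_eq w 4); have := ltn_pmod w (isT : 0 < 4).
case: (w %% 4) => [|[|[|[|r]]]] // _ w_ge3.
- by exists (w %/ 4), 0, 0; lia.
- by exists (w %/ 4), 0, 1; lia.
- by exists (w %/ 4).-1, 2, 0; lia.
- by exists (w %/ 4), 1, 0; lia.
Qed.

Lemma is_m_griesmer_bound w : 3 <= w -> is_m 'F_3 3 1 w (griesmer_bound w).
Proof.
move=> w_ge3; split=> [|K]; last exact: card_ms_le_griesmer_bound.
have [a [b [c [card_abc le_abc_w]]]] := griesmer_bound_decomposition w_ge3.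
have [K [cardK admK]] := exists_mixed_multiset a b c.
by exists K; split=> [S lineS|]; [apply: leq_trans (admK S lineS) le_abc_w | rewrite cardK].
Qed.

(** * Caps of PG(3, 3) *)

Section Caps.
Variable K : {set V} -> nat.
Hypothesis K_point_le1 : forall P, is_point P -> K P <= 1.
Hypothesis K_line_le2 : forall S, is_proj_subspace 1 S -> mult_of K S <= 2.

Lemma exists_cap_point m (A : 'M['F_3]_(m, 4)) : 0 < mult_of K (spanset A) ->
  exists2 p : V, (p <= A)%MS && (p != 0%R) & K (spanset p) = 1.
Proof.
move=> mult_gt0; have : #|[pred y : V | (y <= A)%MS && (y != 0%R)]| * 0 <
    \sum_(y : V | (y <= A)%MS && (y != 0%R)) K (spanset y).
  by rewrite muln0 sum_nz_spanset card_F3 muln_gt0.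
case/exists_gt_sum_const => p /[dup] /andP[_ p0] pA Kp; exists p => //.
by apply/eqP; rewrite eqn_leq Kp K_point_le1 // is_point_spanset.
Qed.

Lemma plane_cap_point m (C : 'M['F_3]_(m, 4)) (p : V) : \rank C = 3 ->
  (p <= C)%MS -> p != 0%R -> K (spanset p) = 1 ->
  mult_of K (spanset C) <= 5 /\ (mult_of K (spanset C) = 5 ->
    forall y : V, (y <= C)%MS -> ~~ (y <= p)%MS -> mult_of K (spanset (col_mx p y)) = 2).
Proof.
move=> rC pC p0 Kp; have := sum_mult_lines_through K p0 pC.
have := card_notin_point p0 pC; rewrite rC Kp card_F3 /= => card24 sum_lines.
have le2 (y : V) : (y <= C)%MS && ~~ (y <= p)%MS -> mult_of K (spanset (col_mx p y)) <= 2.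
  by case/andP=> _ yp; apply/K_line_le2/is_line_col_mx.
have := leq_sum_const le2; rewrite card24 sum_lines => bound; split; first by lia.
move=> m5 y yC yp; apply: (sum_eq_const_bound le2); last by rewrite yC.
by rewrite card24 sum_lines m5.
Qed.

Lemma plane5_lines_through_offcap m (C : 'M['F_3]_(m, 4)) (x y : V) :
  \rank C = 3 -> mult_of K (spanset C) = 5 -> (x <= C)%MS -> x != 0%R -> K (spanset x) = 0 ->
  (y <= C)%MS -> ~~ (y <= x)%MS -> mult_of K (spanset (col_mx x y)) \in [:: 0; 2].
Proof.
move=> rC m5 xC x0 Kx0 yC yx.
case: (posnP (mult_of K (spanset (col_mx x y)))) => [-> // | pos].
have [z /andP[z_xy z0] Kz] := exists_cap_point pos.
have zx : ~~ (z <= x)%MS by apply/negP => /(spanset_rV_eq z0) eq_zx; move: Kz; rewrite eq_zx Kx0.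
have xz : ~~ (x <= z)%MS by apply/negP => /(spanset_rV_eq x0) eq_xz; move: Kz; rewrite -eq_xz Kx0.
have zC : (z <= C)%MS by apply: submx_trans z_xy _; rewrite col_mx_sub xC yC.
have y_xz := col_mx_exchange zx yx z_xy.
have -> : spanset (col_mx x y) = spanset (col_mx z x).
  apply/eqmx_spanset/eqmxP; rewrite !col_mx_sub z_xy sub_col_mxl sub_col_mxr /=.
  by rewrite (submx_trans y_xz) // col_mx_sub sub_col_mxl sub_col_mxr.
by have [_ ->] := plane_cap_point rC zC z0 Kz.
Qed.

Lemma mult_plane_le4 m (C : 'M['F_3]_(m, 4)) : \rank C = 3 -> mult_of K (spanset C) <= 4.
Proof.
move=> rC; rewrite leqNgt; apply/negP => m_gt4.
have [p /andP[pC p0] Kp] := exists_cap_point (ltnW (leq_ltn_trans (isT : 0 < 4) m_gt4)).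
have [m_le5 _] := plane_cap_point rC pC p0 Kp.
have m5 : mult_of K (spanset C) = 5 by lia.
have [x /andP[xC x0] Kx] : exists2 x : V, (x <= C)%MS && (x != 0%R) & K (spanset x) < 1.
  by apply: exists_lt_sum_const; rewrite card_nz_submx sum_nz_spanset rC card_F3 m5.
have {Kx} Kx0 : K (spanset x) = 0 by lia.
have sum30 : \sum_(y : V | (y <= C)%MS && ~~ (y <= x)%MS) mult_of K (spanset (col_mx x y)) = 30.
  by rewrite sum_mult_lines_through // rC Kx0 m5 card_F3.
(* Over the 24 vectors y of C off <x>, the multiplicities of the lines xy add up to 6 * 5 = 30,
   yet each is 0 or 2 and y, -y give the same line, so the total is divisible by 4. *)
pose g (y : V) := if (y <= C)%MS && ~~ (y <= x)%MS then mult_of K (spanset (col_mx x y)) else 0.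
have : #|'F_3|.-1 * 2 %| \sum_(y : V | (y <= C)%MS && (y != 0%R)) g y.
  apply: dvdn_sum_nz => [y | y z z0 eq_yz].
    rewrite /g; case: ifP => // /andP[yC yx].
    by have := plane5_lines_through_offcap rC m5 xC x0 Kx0 yC yx; rewrite !inE => /orP[] /eqP->.
  rewrite /g -!(sub_spanset C) -!(sub_spanset x) eq_yz.
  by rewrite (spanset_col_mx_eq x eq_yz).
have -> : \sum_(y : V | (y <= C)%MS && (y != 0%R)) g y = 30.
  rewrite -sum30 big_mkcond [RHS]big_mkcond; apply: eq_bigr => y _; rewrite /g.
  case: (boolP (y <= x)%MS) => yx; rewrite ?andbF ?andbT; first by case: (_ && _).
  have -> // : y != 0%R by apply: contraNneq yx => ->; exact: sub0mx.
  by rewrite andbT; case: (y <= C)%MS.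
by rewrite card_F3.
Qed.

Lemma card_ms_cap_le10 : card_ms K <= 10.
Proof.
rewrite leqNgt; apply/negP => card_gt10.
have [p /andP[_ p0] Kp] : exists2 p : V, (p <= 1%:M%R)%MS && (p != 0%R) & K (spanset p) = 1.
  by apply: exists_cap_point; rewrite -card_ms_mult_of; lia.
have sp1 := submx1 p; have := sum_mult_lines_through K p0 sp1.
rewrite mxrank1 Kp -card_ms_mult_of card_F3 /= => sum_p.
have [y /andP[_ yp] mult_gt1] :
    exists2 y : V, (y <= 1%:M%R)%MS && ~~ (y <= p)%MS & 1 < mult_of K (spanset (col_mx p y)).
  by apply: exists_gt_sum_const; rewrite card_notin_point // mxrank1 sum_p card_F3; lia.
have rB : \rank (col_mx p y) = 2 by rewrite rank_col_mx_notin // rank_rV p0.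
have mB : mult_of K (spanset (col_mx p y)) = 2.
  by apply/anti_leq; rewrite mult_gt1 andbT; apply/K_line_le2/is_line_col_mx.
(* The 4 planes through the secant line py contain at most 2 further points each. *)
have := sum_mult_join K (submx1 (col_mx p y)); rewrite mxrank1 rB mB -card_ms_mult_of card_F3 /=.
have le4 (z : V) : (z <= 1%:M%R)%MS && ~~ (z <= col_mx p y)%MS ->
    mult_of K (spanset (col_mx (col_mx p y) z)) <= 4.
  by case/andP=> _ zB; apply: mult_plane_le4; rewrite rank_col_mx_notin // rB.
have := leq_sum_const le4; rewrite card_notin_submx ?submx1 // mxrank1 rB card_F3 /=.
by move=> le_sum eq_sum; move: le_sum; rewrite eq_sum; lia.
Qed.

End Caps.

Lemma card_ms_le10 (K : {set V} -> nat) : admissible 1 2 K -> card_ms K <= 10.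
Proof.
move=> adm; have [P0 /is_pointP[p p0 ->] maxK] := exists_max_point K.
case: (leqP (K (spanset p)) 1) => [le1 | gt1]; last first.
  by have := mult_lines_through_point p0 adm; rewrite card_F3; lia.
by apply: card_ms_cap_le10 adm => P /maxK/leq_trans; apply.
Qed.

(** * The elliptic quadric *)

Section EllipticQuadric.
Local Open Scope ring_scope.

Lemma F3_cases (a : 'F_3) : [\/ a = 0, a = 1 | a = -1].
Proof.
case: a => [[|[|[|m]]] lt_m] //; [apply: Or31 | apply: Or32 | apply: Or33]; exact: val_inj.
Qed.

Lemma sum_F3 (f : 'F_3 -> nat) : (\sum_a f a = f 0%R + f 1%R + f (-1)%R)%N.
Proof.
rewrite (perm_big [:: 0; 1; -1]) /= ?big_cons ?big_nil ?addn0 ?addnA //.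
apply: uniq_perm; [exact: index_enum_uniq | by vm_compute | move=> a].
by rewrite mem_index_enum !inE; case: (F3_cases a) => ->; rewrite eqxx ?orbT.
Qed.

Lemma sum_pair (T U : finType) (h : T * U -> nat) :
  (\sum_(t : T * U) h t = \sum_(x : T) \sum_(y : U) h (x, y))%N.
Proof. by rewrite pair_bigA; apply: eq_bigr => -[]. Qed.

Definition coord (v : V) (i : nat) : 'F_3 := v ord0 (inord i).

Lemma rV4_eq0 (v : V) :
  [/\ coord v 0 = 0, coord v 1 = 0, coord v 2 = 0 & coord v 3 = 0] -> v = 0.
Proof.
case=> c0 c1 c2 c3; apply/rowP => j; rewrite mxE -[j]inord_val.
by case: j => [[|[|[|[|j]]]] lt_j].
Qed.

Definition qform (v : V) : 'F_3 := coord v 0 ^+ 2 + coord v 1 ^+ 2 + coord v 2 * coord v 3.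

Lemma qformZ a (v : V) : qform (a *: v) = a ^+ 2 * qform v.
Proof. by rewrite /qform /coord !mxE; ring. Qed.

Lemma qform_line a b (x y : V) : qform (a *: x + b *: y) =
  a ^+ 2 * qform x + a * b * (qform (x + y) - qform x - qform y) + b ^+ 2 * qform y.
Proof. by rewrite /qform /coord !mxE; ring. Qed.

Lemma sqr_add_sqr_eq0 (a b : 'F_3) : a ^+ 2 + b ^+ 2 = 0 -> a = 0 /\ b = 0.
Proof.
by case: (F3_cases a) => ->; case: (F3_cases b) => -> /eqP; vm_compute.
Qed.

(* A line inside the quadric would meet the planes x3 = 0 and x2 = 0; as x0^2 + x1^2
   is anisotropic over F_3, it would contain e2 and e3, but qform (e2 + e3) = 1. *)
Lemma no_singular_line (A : 'M['F_3]_(2, 4)) :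
  \rank A = 2 -> ~ (forall y : V, (y <= A)%MS -> qform y = 0).
Proof.
move=> rA singA; have rA_gt1 : (1 < \rank A)%N by rewrite rA.
have [v v0 /andP[vA /eqP v3]] := exists_nz_coord_eq0 (inord 3) rA_gt1.
have [u u0 /andP[uA /eqP u2]] := exists_nz_coord_eq0 (inord 2) rA_gt1.
have := singA v vA; rewrite /qform /coord v3 mulr0 addr0 => /sqr_add_sqr_eq0[v_0 v_1].
have := singA u uA; rewrite /qform /coord u2 mul0r addr0 => /sqr_add_sqr_eq0[u_0 u_1].
have := singA (v + u) (addmx_sub vA uA); rewrite /qform /coord !mxE.
rewrite v_0 v_1 u_0 u_1 v3 u2 !addr0 !add0r expr0n /= !add0r.
move/eqP; rewrite mulf_eq0 => /orP[] /eqP c0.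
  by move: v0; rewrite (rV4_eq0 (And4 v_0 v_1 c0 v3)) eqxx.
by move: u0; rewrite (rV4_eq0 (And4 u_0 u_1 u2 c0)) eqxx.
Qed.

Definition singular_points (P : {set V}) : nat := [exists v in P, (v != 0) && (qform v == 0)].

Lemma singular_points_spanset (x : V) : x != 0 -> singular_points (spanset x) = (qform x == 0).
Proof.
move=> x0; congr nat_of_bool; apply/exists_inP/idP => [[v] | qx0]; last first.
  by exists x; rewrite ?in_spanset ?submx_refl ?x0.
rewrite in_spanset => /sub_rVP[a ->] /andP[ax0]; rewrite qformZ mulf_eq0 => /orP[|//].
by rewrite expf_eq0 => /andP[_ /eqP a0]; move: ax0; rewrite a0 scale0r eqxx.
Qed.

Lemma sum_nz_singular m (A : 'M['F_3]_(m, 4)) :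
  (2 * mult_of singular_points (spanset A) =
   #|[pred y : V | (y <= A)%MS && (y != 0%R) && (qform y == 0%R)]|)%N.
Proof.
have := sum_nz_spanset A singular_points; rewrite card_F3 /= => <-.
rewrite -sum_indicator; apply: eq_bigr => y /andP[_ y0].
exact: singular_points_spanset.
Qed.

Definition vec4 (t : 'F_3 * 'F_3 * 'F_3 * 'F_3) : V :=
  \row_(j < 4) nth 0 [:: t.1.1.1; t.1.1.2; t.1.2; t.2] j.

Definition rV4_coords (v : V) := (coord v 0, coord v 1, coord v 2, coord v 3).

Lemma vec4K : cancel vec4 rV4_coords.
Proof. by case=> [[[a b] c] d]; rewrite /rV4_coords /coord !mxE !inordK. Qed.

Lemma rV4_coordsK : cancel rV4_coords vec4.
Proof.
move=> v; apply/rowP => j; rewrite mxE -[j]inord_val.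
by case: j => [[|[|[|[|j]]]] lt_j] //=; rewrite inordK.
Qed.

Lemma sum_rV4 (g : V -> nat) :
  (\sum_(x : V) g x = \sum_a \sum_b \sum_c \sum_d g (vec4 (a, b, c, d)))%N.
Proof.
rewrite (reindex vec4) /=; last by exists rV4_coords => ? _; [exact: vec4K | exact: rV4_coordsK].
by rewrite !sum_pair.
Qed.

Lemma card_singular_vectors : #|[pred y : V | (y <= 1%:M)%MS && (y != 0) && (qform y == 0)]| = 20%N.
Proof.
rewrite -sum1_card big_mkcond sum_rV4 /=.
have vec4_eq0 t : (vec4 t == 0) = (t == (0, 0, 0, 0)).
  by rewrite -(inj_eq (can_inj rV4_coordsK)) vec4K /rV4_coords /coord !mxE.
have qform_vec4 a b c d : qform (vec4 (a, b, c, d)) = a ^+ 2 + b ^+ 2 + c * d.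
  by rewrite /qform /coord !mxE !inordK.
under eq_bigr do under eq_bigr do under eq_bigr do under eq_bigr do
  rewrite unfold_in /= submx1 vec4_eq0 qform_vec4.
by rewrite !sum_F3; vm_compute.
Qed.

Lemma card_ms_singular_points : card_ms singular_points = 10%N.
Proof.
by have := sum_nz_singular (1%:M : 'M['F_3]_4); rewrite -card_ms_mult_of card_singular_vectors; lia.
Qed.

Lemma binary_qform_zeros (al be ga : 'F_3) : ~~ [&& al == 0, be == 0 & ga == 0] ->
  (\sum_(p : 'F_3 * 'F_3)
     ((p != (0%R, 0%R)) && ((p.1 ^+ 2 * al + p.1 * p.2 * be + p.2 ^+ 2 * ga)%R == 0%R) : nat)
   <= 4)%N.
Proof.
rewrite sum_pair !sum_F3.
by case: (F3_cases al) => ->; case: (F3_cases be) => ->; case: (F3_cases ga) => ->; vm_compute.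
Qed.

Section Line.
Variable A : 'M['F_3]_(2, 4).
Hypothesis rA : \rank A = 2.

Definition line_vec (p : 'F_3 * 'F_3) : V := (\row_(j < 2) [:: p.1; p.2]`_j) *m A.

Lemma line_vecE p : line_vec p = p.1 *: row 0 A + p.2 *: row 1 A.
Proof.
apply/rowP => k; rewrite !mxE big_ord_recl big_ord_recl big_ord0 addr0 !mxE /=.
by congr (_ * A _ _ + _ * A _ _); apply: val_inj.
Qed.

Lemma line_vec_inj : injective line_vec.
Proof.
have /row_free_inj injA : row_free A by rewrite /row_free rA.
by move=> [a b] [c d] /injA/rowP eq_ab; have := eq_ab 0; have := eq_ab 1; rewrite !mxE /= => -> ->.
Qed.

Lemma line_vec_onto (y : V) : (y <= A)%MS -> exists p, y = line_vec p.
Proof.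
case/submxP => u ->; exists (u 0 0, u 0 1); congr (_ *m _); apply/rowP => j; rewrite mxE.
by case: j => [[|[|j]] lt_j] //=; congr (u 0 _); apply: val_inj.
Qed.

Lemma mult_singular_line : (mult_of singular_points (spanset A) <= 2)%N.
Proof.
set al := qform (row 0 A); set ga := qform (row 1 A).
set be := qform (row 0 A + row 1 A) - al - ga.
have qform_line_vec p : qform (line_vec p) = p.1 ^+ 2 * al + p.1 * p.2 * be + p.2 ^+ 2 * ga.
  by rewrite line_vecE qform_line.
have line_vec00 : line_vec (0, 0) = 0 by rewrite line_vecE !scale0r addr0.
case: (boolP [&& al == 0, be == 0 & ga == 0]) => [/and3P[/eqP al0 /eqP be0 /eqP ga0] | nz_form].
  case: (no_singular_line rA) => y /line_vec_onto[p ->].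
  by rewrite qform_line_vec al0 be0 ga0 !mulr0 !addr0.
have : (2 * mult_of singular_points (spanset A) <= 4)%N; last by lia.
rewrite sum_nz_singular; apply: leq_trans (binary_qform_zeros nz_form).
have -> : #|[pred y : V | (y <= A)%MS && (y != 0) && (qform y == 0)]| =
          #|[pred p | (p != (0, 0)) && (qform (line_vec p) == 0)]|.
  rewrite -(card_image line_vec_inj); apply: eq_card => y; rewrite !inE.
  apply/idP/imageP => [/andP[/andP[yA y0] qy] | [p]].
    have [p def_y] := line_vec_onto yA; exists p; rewrite // inE -def_y qy andbT.
    by apply: contraNneq y0 => p0; rewrite def_y p0 line_vec00.
  rewrite inE => /andP[p0 qp] ->; rewrite submxMl qp andbT.
  by apply: contraNneq p0 => /esym; rewrite -line_vec00 => /line_vec_inj->.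
rewrite -sum1_card big_mkcond; apply/eq_leq/eq_bigr => p _.
by rewrite unfold_in qform_line_vec; case: (_ && _).
Qed.

End Line.

End EllipticQuadric.

Lemma is_m_2 : is_m 'F_3 3 1 2 10.
Proof.
split=> [|K]; last exact: card_ms_le10.
exists singular_points; split; last exact: card_ms_singular_points.
by move=> _ /is_lineP[A rA ->]; apply: mult_singular_line.
Qed.

Theorem mainTheorem10 :
  (forall w : nat, 3 <= w ->
     exists n : nat, griesmer_ub 3 3 1 w n /\ is_m 'F_3 3 1 w n)
  /\ is_m 'F_3 3 1 2 10.
Proof.
split; last exact: is_m_2.
move=> w w_ge3; exists (griesmer_bound w).
by split; [exact: griesmer_ub_bound | exact: is_m_griesmer_bound].
Qed.
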